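(* Let $\mathcal{X},\mathcal{Y}$ be finite sets, $P_X$ a probability distribution on $\mathcal{X}$, $d:\mathcal{X}\times\mathcal{Y}\to[0,\infty)$ a distortion function, and $Q_Y$ a probability distribution on $\mathcal{Y}$. Let $R\ge 0$ be such that $e^R$ is an integer, and let $M=e^R+1$. Let $X\sim P_X$ and let $Y_0,\dots,Y_{M-1}$ be i.i.d. with law $Q_Y$, independent of $X$. Then $$\mathbb{E}\Big[\min_{0\le i\le M-1} d(X,Y_i)\Big]=\int_0^1 \tilde D(w,Q_Y)\,G_M'(w)\,dw,$$ where $G_M(w)=-(1-w)^{M-1}\big((M-1)w+1\big)$ and $\tilde D(w,Q_Y)$ is as defined in the context.
   Context: For $x\in\mathcal{X}$, $y\in\mathcal{Y}$, $u\in[0,1]$ let $p_{c,x,y,u}=Q_Y\{y': d(x,y')<d(x,y)\}+u\cdot Q_Y\{y': d(x,y')=d(x,y)\}$. For $w\in(0,1]$ define $$\tilde D(w,Q_Y)=w^{-1}\,\mathbb{E}\big[d(X,Y)\,\mathbf{1}\{p_{c,X,Y,U}\le w\}\big],$$ where $X\sim P_X$, $Y\sim Q_Y$ and $U$ uniform on $[0,1]$ are independent. *)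

From HB Require Import structures.
From mathcomp Require Import all_boot all_order all_algebra.
From mathcomp Require Import all_classical all_reals all_analysis.
Set Implicit Arguments. Unset Strict Implicit. Unset Printing Implicit Defensive.
Import Order.TTheory GRing.Theory Num.Theory.
Local Open Scope ring_scope.
Local Open Scope classical_set_scope.

Section Defs.
Variables (R : realType) (X Y : finType).

Definition pc (Q : Y -> R) (d : X -> Y -> R) (x : X) (y : Y) (u : R) : R :=
  \sum_(y' : Y | d x y' < d x y) Q y' + u * \sum_(y' : Y | d x y' == d x y) Q y'.

(* Dtilde(w,Q_Y) = w^-1 E[ d(X,Y) 1{p_{c,X,Y,U} <= w} ],
   X ~ P, Y ~ Q, U ~ Uniform[0,1] independent: the expectation is
   sum over x, y of P x * Q y * (integral over u in [0,1] w.r.t. Lebesgue). *)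
Definition Dtilde (P : X -> R) (Q : Y -> R) (d : X -> Y -> R) (w : R) : R :=
  w^-1 * \sum_(x : X) \sum_(y : Y)
    P x * Q y * Rintegral lebesgue_measure `[0%R, 1%R]
      (fun u : R => d x y * ((pc Q d x y u <= w)%R)%:R).

Definition GM (M : nat) (w : R) : R :=
  - ((1 - w) ^+ (M.-1) * ((M.-1)%:R * w + 1)).

(* E[ min_{0<=i<=M-1} d(X, Y_i) ] with X ~ P and Y_0..Y_{M-1} iid ~ Q,
   independent of X, as a finite sum over the joint law. M = n.+1. *)
Definition Emin (n : nat) (P : X -> R) (Q : Y -> R) (d : X -> Y -> R) : R :=
  \sum_(x : X) \sum_(ys : {ffun 'I_n.+1 -> Y})
    P x * (\prod_(i < n.+1) Q (ys i)) *
    \big[Num.min/d x (ys ord0)]_(i < n.+1) d x (ys i).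

End Defs.

(* Break ties among Y_0, ..., Y_(M-1) in favour of the smallest index.  For
   fixed x, the minimum of the d(x, Y_i) is then attained first at position j,
   with value d(x, y), with probability Q(y) (1 - a - b)^j (1 - a)^(M-1-j), where
   a = Q{d(x, .) < d(x, y)} and b = Q{d(x, .) = d(x, y)}.  On the other side,
   p_c = a + b U is uniform on [a, a + b], so the inner integral of D~ is d(x, y)
   times its CDF F, and G_M'(w) = w M (M-1) (1-w)^(M-2) cancels the factor 1/w.
   As the integral over [0, 1] of M (M-1) (1-w)^(M-2) (w - c)_+ is (1 - c)^M,
   integrating F against M (M-1) (1-w)^(M-2) gives ((1-a)^M - (1-a-b)^M) / b,
   which is the same geometric sum.  Only the hypotheses on Q_Y and M >= 2
   (from e^R = M - 1 > 0) are needed. *)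

From mathcomp Require Import all_boot all_order all_algebra.
From mathcomp Require Import all_classical all_reals all_analysis.
From mathcomp Require Import ring lra.
Import Order.TTheory GRing.Theory Num.Theory.
Import numFieldTopology.Exports.
Local Open Scope ring_scope.
Local Open Scope classical_set_scope.

Section FirstArgmin.
Context {R : realDomainType}.

Definition first_min_ind {N} (f : 'I_N -> R) (j i : 'I_N) : R :=
  if (i < j)%N then ((f j < f i)%R)%:R else ((f j <= f i)%R)%:R.

Lemma bigmin_first_argmin {N} (f : 'I_N.+1 -> R) :
  \big[Num.min/f ord0]_(i < N.+1) f i
  = \sum_(j < N.+1) f j * \prod_(i < N.+1) first_min_ind f j i.
Proof.
have [i0 _ min_i0] := @arg_minP _ R _ ord0 xpredT f isT.
have [j0 /eqP fj0 first_j0] :=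
  @arg_minnP _ i0 (fun j => f j == f i0) (fun j => nat_of_ord j) (eqxx _).
have min_j0 i : f j0 <= f i by rewrite fj0; exact: min_i0.
have lt_before (i : 'I_N.+1) : (i < j0)%N -> f j0 < f i.
  move=> ltij0; rewrite lt_neqAle min_j0 andbT fj0 eq_sym.
  by apply: contraTN ltij0 => /first_j0; rewrite -leqNgt.
have -> : \big[Num.min/f ord0]_(i < N.+1) f i = f j0.
  apply/le_anti/andP; split; first exact: bigmin_le.
  by apply/bigmin_geP; split => // i _.
rewrite (bigD1 j0) //= big1 => [|i _]; last first.
  by rewrite /first_min_ind; case: ltnP => [/lt_before ->|_]; rewrite ?min_j0.
rewrite mulr1 big1 ?addr0 // => j neq_jj0.
rewrite (bigD1 j0) //= {1}/first_min_ind.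
have [ltj0j|lejj0] := ltnP j0 j; first by rewrite ltNge min_j0 mul0r mulr0.
have ltjj0 : (j < j0)%N by rewrite ltn_neqAle lejj0 andbT.
by rewrite leNgt lt_before // mul0r mulr0.
Qed.

Lemma prod_ord_lt_eq_gt N j (A B C : R) : (j < N)%N ->
  \prod_(i < N) (if (i < j)%N then A else if i == j :> nat then B else C)
  = A ^+ j * B * C ^+ (N.-1 - j).
Proof.
move=> ltjN.
rewrite -(big_mkord xpredT (fun i => if (i < j)%N then A else if i == j then B else C)).
rewrite (big_cat_nat (leq0n j) (ltnW ltjN)) (big_ltn ltjN) /= ltnn eqxx mulrA.
rewrite (eq_big_nat _ _ (F2 := fun => A)) => [|i /andP[_ ->] //].
rewrite [X in _ * X](eq_big_nat _ _ (F2 := fun => C)) => [|i /andP[ltji _]]; last first.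
  by rewrite ltnNge ltnW // gtn_eqF.
by rewrite !prodr_const_nat subn0 -subn1 -subnDA add1n.
Qed.

End FirstArgmin.

Section ExpectedMinimum.
Context {R : realDomainType} {Y : finType} (Q e : Y -> R) (n : nat).

Definition Qgt (y : Y) := \sum_(y' | e y < e y') Q y'.
Definition Qge (y : Y) := \sum_(y' | e y <= e y') Q y'.

(* The product over i of [first_min_weight j y i (ys i)] is the weight of [ys]
   if [ys j = y] and j is the first position of the minimum of [e \o ys], and 0
   otherwise. *)
Definition first_min_weight (j : 'I_n.+1) (y : Y) (i : 'I_n.+1) (y' : Y) : R :=
  Q y' * (if (i < j)%N then ((e y < e y')%R)%:R
          else if i == j :> nat then (y' == y)%:R else ((e y <= e y')%R)%:R).

Lemma sum_mul_nat_bool (p : pred Y) :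
  \sum_y' Q y' * (p y')%:R = \sum_(y' | p y') Q y'.
Proof.
by rewrite [RHS]big_mkcond; apply: eq_bigr => y' _; case: (p y'); rewrite ?mulr1 ?mulr0.
Qed.

Lemma sum_first_min_weight j y i :
  \sum_y' first_min_weight j y i y'
  = if (i < j)%N then Qgt y else if i == j :> nat then Q y else Qge y.
Proof.
rewrite /first_min_weight; case: ltnP => _; first exact: sum_mul_nat_bool.
by case: eqP => _; rewrite sum_mul_nat_bool // big_pred1_eq.
Qed.

Lemma prod_bigmin_first_min_weight (ys : {ffun 'I_n.+1 -> Y}) :
  (\prod_(i < n.+1) Q (ys i)) * \big[Num.min/e (ys ord0)]_(i < n.+1) e (ys i)
  = \sum_(j < n.+1) \sum_y e y * \prod_(i < n.+1) first_min_weight j y i (ys i).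
Proof.
rewrite (bigmin_first_argmin (fun i => e (ys i))) big_distrr; apply: eq_bigr => j _ /=.
rewrite (bigD1 (ys j)) //= [X in _ = _ + X]big1 ?addr0 => [|y neq_y]; last first.
  rewrite (bigD1 j) //= /first_min_weight ltnn eqxx eq_sym (negbTE neq_y).
  by rewrite mulr0 mul0r mulr0.
rewrite /first_min_weight big_split /= mulrCA; congr (_ * (_ * _)).
apply: eq_bigr => i _; rewrite /first_min_ind.
by case: ltnP => // _; case: eqP => [/val_inj ->|]; rewrite ?eqxx ?lexx.
Qed.

Lemma sum_prod_bigmin :
  \sum_(ys : {ffun 'I_n.+1 -> Y})
     (\prod_(i < n.+1) Q (ys i)) * \big[Num.min/e (ys ord0)]_(i < n.+1) e (ys i)
  = \sum_y Q y * e y * \sum_(j < n.+1) Qgt y ^+ j * Qge y ^+ (n - j).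
Proof.
under eq_bigr do rewrite prod_bigmin_first_min_weight.
rewrite exchange_big; under eq_bigr do rewrite exchange_big.
rewrite exchange_big; apply: eq_bigr => y _; rewrite big_distrr; apply: eq_bigr => j _ /=.
rewrite -big_distrr -bigA_distr_bigA /=.
under eq_bigr do rewrite sum_first_min_weight.
rewrite prod_ord_lt_eq_gt //=; ring.
Qed.

Definition Qlt (y : Y) := \sum_(y' | e y' < e y) Q y'.
Definition Qeq (y : Y) := \sum_(y' | e y' == e y) Q y'.

Lemma Qge_Qlt y : \sum_y' Q y' = 1 -> Qge y = 1 - Qlt y.
Proof.
move=> <-; rewrite /Qlt (bigID (fun y' => e y' < e y)) /= addrC addrK.
by apply: eq_bigl => y'; rewrite -leNgt.
Qed.

Lemma Qgt_Qge y : Qgt y = Qge y - Qeq y.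
Proof.
apply/eqP; rewrite eq_sym subr_eq addrC /Qge (bigID (fun y' => e y' == e y)) /=.
apply/eqP; congr (_ + _); apply: eq_bigl => y'.
  by case: eqP => [->|]; rewrite ?lexx ?andbF.
by rewrite lt_neqAle eq_sym andbC.
Qed.

Hypothesis Q_ge0 : forall y, 0 <= Q y.

Lemma Qlt_ge0 y : 0 <= Qlt y.
Proof. exact: sumr_ge0. Qed.

Lemma Qeq_gt0 y : Q y != 0 -> 0 < Qeq y.
Proof.
move=> Qy_neq0; rewrite /Qeq (bigD1 y) //= ltr_wpDr ?sumr_ge0 //.
by rewrite lt_def Qy_neq0 Q_ge0.
Qed.

Lemma Qlt_Qeq_le1 y : \sum_y' Q y' = 1 -> Qlt y + Qeq y <= 1.
Proof.
move=> Q1; have : 0 <= Qgt y by exact: sumr_ge0.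
by rewrite Qgt_Qge Qge_Qlt // subr_ge0 lerBrDl addrC.
Qed.

End ExpectedMinimum.

Lemma integrable_Rsum d (T : measurableType d) (R : realType)
    (mu : {measure set T -> \bar R}) (D : set T) (I : Type) (s : seq I)
    (f : I -> T -> R) :
  measurable D -> (forall i, mu.-integrable D (EFin \o f i)) ->
  mu.-integrable D (EFin \o (fun x => \sum_(i <- s) f i x)).
Proof.
move=> mD intf; apply: (eq_integrable mD (fun x => \sum_(i <- s) (f i x)%:E)).
  by move=> x _; rewrite /= sumEFin.
by apply: (integrable_sum mD) => i _; exact: intf.
Qed.

Lemma Rintegral_sum d (T : measurableType d) (R : realType)
    (mu : {measure set T -> \bar R}) (D : set T) (I : Type) (s : seq I)
    (f : I -> T -> R) :
  measurable D -> (forall i, mu.-integrable D (EFin \o f i)) ->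
  \int[mu]_(x in D) (\sum_(i <- s) f i x) = \sum_(i <- s) \int[mu]_(x in D) f i x.
Proof.
move=> mD intf; elim: s => [|i s IH].
  by under eq_Rintegral do rewrite big_nil; rewrite Rintegral_cst // mul0r big_nil.
under eq_Rintegral do rewrite big_cons.
by rewrite RintegralD // ?IH ?big_cons //; exact: integrable_Rsum.
Qed.

Section RealIntegrals.
Context {R : realType}.
Notation mu := (@lebesgue_measure R).

Lemma continuous_integrable_itv (a b : R) {f : R -> R} :
  continuous f -> mu.-integrable `[a, b] (EFin \o f).
Proof.
move=> cf; apply: continuous_compact_integrable; first exact: segment_compact.
exact: continuous_subspaceT.
Qed.

Lemma Rintegral_deriv_poly (p : {poly R}) (a b : R) : a <= b ->
  \int[mu]_(x in `[a, b]) (p^`()).[x] = p.[b] - p.[a].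
Proof.
rewrite le_eqVlt => /predU1P[<-|ltab].
  by rewrite set_itv1 Rintegral_set1 subrr.
rewrite /Rintegral (@continuous_FTC2 _ _ (horner p)) //.
- by apply: continuous_subspaceT => x; exact: continuous_horner.
- split; first by move=> x _; exact: derivable_horner.
  + exact/cvg_at_right_filter/continuous_horner.
  + exact/cvg_at_left_filter/continuous_horner.
- by move=> x _; rewrite -derivE.
Qed.

Definition ramp (c w : R) : R := Num.max 0 (w - c).

Lemma ramp_eq0 {c w : R} : w <= c -> ramp c w = 0.
Proof. by move=> lewc; rewrite /ramp max_l // subr_le0. Qed.

Lemma ramp_sub {c w : R} : c <= w -> ramp c w = w - c.
Proof. by move=> lecw; rewrite /ramp max_r // subr_ge0. Qed.

Lemma continuous_ramp c : continuous (ramp c).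
Proof.
have : continuous (cst 0 \max (fun w : R => w - c)).
  apply: max_fun_continuous => w; first exact: cst_continuous.
  by apply: continuousB => //; exact: cst_continuous.
by [].
Qed.

Definition GM_weight (m : nat) (w : R) : R := (m.+1 * m.+2)%:R * (1 - w) ^+ m.

Lemma GM_weight_poly m : GM_weight m = horner ((m.+1 * m.+2)%:R%:P * (1 - 'X) ^+ m).
Proof. by apply/funext => w; rewrite /GM_weight !hornerE. Qed.

Lemma continuous_GM_weight m : continuous (GM_weight m).
Proof. by rewrite GM_weight_poly => w; exact: continuous_horner. Qed.

Lemma deriv_one_subX_exp k :
  deriv ((1 - 'X) ^+ k) = - k%:R%:P * (1 - 'X) ^+ k.-1 :> {poly R}.
Proof.
rewrite deriv_exp derivB derivX -polyC1 derivC sub0r polyC1.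
by rewrite -mulrnAr -mulr_natl -polyC_natr mulN1r mulNr.
Qed.

Lemma derive1_GM m w : derive1 (@GM R m.+2) w = w * GM_weight m w.
Proof.
have -> : @GM R m.+2 = horner (- ((1 - 'X) ^+ m.+1 * (m.+1%:R *: 'X + 1))).
  by apply/funext => x; rewrite /GM !hornerE.
rewrite -derivE derivN derivM deriv_one_subX_exp derivD derivZ derivX -polyC1 derivC.
by rewrite !hornerE /= /GM_weight natrM exprS; ring.
Qed.

Lemma continuous_GM_weight_ramp m c : continuous (fun w => GM_weight m w * ramp c w).
Proof.
by move=> w; apply: continuousM; [exact: continuous_GM_weight | exact: continuous_ramp].
Qed.

Lemma Rintegral_GM_weight_ramp m c : 0 <= c <= 1 ->
  \int[mu]_(w in `[0, 1]) (GM_weight m w * ramp c w) = (1 - c) ^+ m.+2.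
Proof.
move=> /andP[c0 c1].
have int01 := continuous_integrable_itv 0 1 (continuous_GM_weight_ramp m c).
have vanish : \int[mu]_(w in `[0, c]) (GM_weight m w * ramp c w) = 0.
  rewrite (@eq_Rintegral _ _ _ _ _ (cst 0)) ?Rintegral_cst ?mul0r // => w.
  by rewrite inE /= in_itv /= => /andP[_ lewc]; rewrite ramp_eq0 ?mulr0.
have := Rintegral_itvB (x := c) int01; rewrite !bnd_simp vanish subr0 => /(_ c0 c1) ->.
rewrite Rintegral_itv_obnd_cbnd; last first.
  by apply: integrableS int01 => //; apply: subset_itv; rewrite bnd_simp.
pose K : {poly R} :=
  - (m.+2%:R *: ((1 - 'X) ^+ m.+1 * ('X - c%:P))) - (1 - 'X) ^+ m.+2.
transitivity (\int[mu]_(w in `[c, 1]) (K^`()).[w]).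
  apply: eq_Rintegral => w; rewrite inE /= in_itv /= => /andP[lecw _].
  rewrite /K /GM_weight ramp_sub // derivB derivN derivZ derivM !deriv_one_subX_exp.
  by rewrite derivXsubC !hornerE /= natrM exprS; ring.
by rewrite Rintegral_deriv_poly // /K !hornerE /= subrr !expr0n /=; ring.
Qed.

Lemma lebesgue_measure_itv0_setI01 (s : R) :
  mu (`[0, s] `&` `[0, 1]) = (Num.max 0 (Num.min s 1))%:E.
Proof.
rewrite -set_itvI lebesgue_measure_itv /= joinxx meetEtotal lte_fin oppr0 adde0.
by case: ltP.
Qed.

Definition unif_cdf (a b w : R) : R := (ramp a w - ramp (a + b) w) / b.

Lemma unif_cdf_clamp a b w : 0 < b ->
  Num.max 0 (Num.min ((w - a) / b) 1) = unif_cdf a b w.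
Proof.
rewrite /unif_cdf => b0; set s := (w - a) / b.
have [lewa|ltaw] := lerP w a.
  have s0 : s <= 0 by rewrite pmulr_lle0 ?invr_gt0 // subr_le0.
  rewrite (ramp_eq0 lewa) (@ramp_eq0 (a + b) w); last by lra.
  by rewrite subrr mul0r max_l // ge_min s0.
have [lewab|ltabw] := lerP w (a + b).
  have s0 : 0 <= s by apply: divr_ge0; lra.
  have s1 : s <= 1 by rewrite ler_pdivrMr // mul1r; lra.
  by rewrite (ramp_eq0 lewab) ramp_sub ?ltW // subr0 min_l // max_r.
have s1 : 1 <= s by rewrite ler_pdivlMr // mul1r; lra.
rewrite !ramp_sub; [|lra|lra].
have -> : w - a - (w - (a + b)) = b by ring.
by rewrite divff ?gt_eqF // min_r // max_r.
Qed.

Lemma Rintegral_affine_le k a b w : 0 < b ->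
  \int[mu]_(u in `[0, 1]) (k * ((a + u * b <= w)%R)%:R)
  = k * unif_cdf a b w.
Proof.
move=> b0; set s := (w - a) / b.
transitivity (\int[mu]_(u in `[0, 1]) (k * \1_`[0, s] u)).
  apply: eq_Rintegral => u; rewrite inE /= in_itv /= => /andP[u0 _].
  by rewrite indicE mem_setE in_itv /= u0 ler_pdivlMr // lerBrDl addrC.
rewrite RintegralZl //; last first.
  exact: (integrableS _ _ _ (integrable_indic_itv 0 s true false)).
rewrite /Rintegral integral_indic //= lebesgue_measure_itv0_setI01 /=.
by rewrite unif_cdf_clamp.
Qed.

Lemma unif_cdf_eq0 a b w : w <= a -> 0 <= b -> unif_cdf a b w = 0.
Proof.
by move=> lewa b0; rewrite /unif_cdf !ramp_eq0 ?subrr ?mul0r // ler_wpDr.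
Qed.

Lemma continuous_GM_weight_unif_cdf (k : R) m a b :
  continuous (fun w => k * (GM_weight m w * unif_cdf a b w)).
Proof.
move=> w; apply: (@continuousM _ _ (cst k) (fun w => GM_weight m w * unif_cdf a b w)).
  exact: cst_continuous.
apply: continuousM; first exact: continuous_GM_weight.
apply: continuousM; last exact: cst_continuous.
by apply: continuousB; exact: continuous_ramp.
Qed.

Lemma Rintegral_GM_weight_unif_cdf k m a b : 0 <= a -> 0 < b -> a + b <= 1 ->
  \int[mu]_(w in `[0, 1]) (k * (GM_weight m w * unif_cdf a b w))
  = k * \sum_(j < m.+2) (1 - a - b) ^+ j * (1 - a) ^+ (m.+1 - j).
Proof.
move=> a0 b0 ab1.
have int c := continuous_integrable_itv 0 1 (continuous_GM_weight_ramp m c).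
transitivity (\int[mu]_(w in `[0, 1])
    (k / b * (GM_weight m w * ramp a w - GM_weight m w * ramp (a + b) w))).
  by apply: eq_Rintegral => w _; rewrite /unif_cdf; ring.
rewrite RintegralZl //; last first.
  apply: continuous_integrable_itv => w.
  exact: (continuousB (continuous_GM_weight_ramp m a w)
                      (continuous_GM_weight_ramp m (a + b) w)).
rewrite RintegralB ?int // !Rintegral_GM_weight_ramp; try (apply/andP; split; lra).
rewrite subrXX (_ : 1 - a - (1 - (a + b)) = b); last by ring.
rewrite mulrA divfK ?gt_eqF // opprD addrA.
by congr (_ * _); apply: eq_bigr => j _; rewrite mulrC.
Qed.

End RealIntegrals.

Lemma Dtilde_derive1_GM {R : realType} {X Y : finType} (P : X -> R) (Q : Y -> R)
    (d : X -> Y -> R) (m : nat) (w : R) :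
  (forall y, 0 <= Q y) ->
  Dtilde P Q d w * derive1 (@GM R m.+2) w
  = \sum_x \sum_y P x * Q y * d x y *
      (GM_weight m w * unif_cdf (Qlt Q (d x) y) (Qeq Q (d x) y) w).
Proof.
move=> Q_ge0.
have inner x y : P x * Q y * Rintegral lebesgue_measure `[0, 1]
      (fun u => d x y * ((pc Q d x y u <= w)%R)%:R)
    = P x * Q y * d x y * unif_cdf (Qlt Q (d x) y) (Qeq Q (d x) y) w.
  have [->|Qy_neq0] := eqVneq (Q y) 0; first by rewrite !(mulr0, mul0r).
  by rewrite (Rintegral_affine_le _ (Qlt Q (d x) y)) ?mulrA ?Qeq_gt0.
rewrite derive1_GM /Dtilde; under eq_bigr do under eq_bigr do rewrite inner.
(* At w = 0 the factor w^-1 of Dtilde is 0^-1 = 0, and so is the CDF. *)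
have [->|w_neq0] := eqVneq w 0.
  rewrite mul0r mulr0; symmetry; apply: big1 => x _; apply: big1 => y _.
  by rewrite unif_cdf_eq0 ?mulr0 ?Qlt_ge0 // sumr_ge0.
rewrite -mulrA mulrCA mulKf // big_distrl; apply: eq_bigr => x _.
by rewrite big_distrl; apply: eq_bigr => y _; rewrite /=; ring.
Qed.

Theorem theorem1 (R : realType) (X Y : finType)
  (P : X -> R) (hP0 : forall x, 0 <= P x) (hP1 : \sum_(x : X) P x = 1)
  (Q : Y -> R) (hQ0 : forall y, 0 <= Q y) (hQ1 : \sum_(y : Y) Q y = 1)
  (d : X -> Y -> R) (hd : forall x y, 0 <= d x y)
  (Rate : R) (hR : 0 <= Rate) (n : nat) (hn : expR Rate = n%:R) :
  let M := n.+1 in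
  Emin n P Q d =
  Rintegral lebesgue_measure `[0%R, 1%R]
    (fun w : R => Dtilde P Q d w * derive1 (@GM R M) w).
Proof.
case: n hn => [|m] hn /=; first by have := expR_gt0 Rate; rewrite hn ltxx.
have integrable_term (k a b : R) := continuous_integrable_itv 0 1
  (continuous_GM_weight_unif_cdf k m a b).
rewrite (funext (fun w => Dtilde_derive1_GM P Q d m w hQ0)).
rewrite Rintegral_sum // => [|x]; last by apply: integrable_Rsum.
apply: eq_bigr => x _; rewrite Rintegral_sum //.
under eq_bigr do rewrite -mulrA.
rewrite -big_distrr sum_prod_bigmin big_distrr; apply: eq_bigr => y _ /=.
have [->|Qy_neq0] := eqVneq (Q y) 0.
  under eq_Rintegral do rewrite mulr0 !mul0r.
  by rewrite Rintegral_cst // !(mul0r, mulr0).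
rewrite Rintegral_GM_weight_unif_cdf ?Qlt_ge0 ?Qeq_gt0 ?Qlt_Qeq_le1 //.
by rewrite Qgt_Qge Qge_Qlt // !mulrA.
Qed.
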